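(* Let $n\ge 1$ and let $p,q,r$ be nonzero real numbers. If the map $(A,B,C)\mapsto \mathrm{Tr}[A^{q/2}B^pA^{q/2}C^r]$ is jointly convex (respectively jointly concave) on $\mathcal{P}_n\times\mathcal{P}_n\times\mathcal{P}_n$, then the matrix-valued map $(A,B)\mapsto A^{q/2}B^pA^{q/2}$ is jointly operator convex (respectively jointly operator concave) on $\mathcal{P}_n\times\mathcal{P}_n$.
   Context: $\mathcal{P}_n$ denotes the set of $n\times n$ positive definite complex matrices. A map $F:\mathcal{P}_n\times\mathcal{P}_n\to M_n(\mathbb{C})_{\mathrm{sa}}$ is jointly operator convex if $F(\lambda A_1+(1-\lambda)A_2,\lambda B_1+(1-\lambda)B_2)\le \lambda F(A_1,B_1)+(1-\lambda)F(A_2,B_2)$ in the positive semidefinite (Loewner) order for all $A_i,B_i\in\mathcal{P}_n$, $\lambda\in[0,1]$; operator concave is defined with the reversed inequality. *)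

From Stdlib Require Import Reals ClassicalEpsilon.
From mathcomp Require Import all_boot.

Set Implicit Arguments.
Unset Strict Implicit.
Local Open Scope R_scope.

Record C := mkC { Re : R; Im : R }.
Definition C0 : C := mkC 0 0.
Definition C1 : C := mkC 1 0.
Definition CofR (x : R) : C := mkC x 0.
Definition Cadd (z w : C) : C := mkC (Re z + Re w) (Im z + Im w).
Definition Copp (z : C) : C := mkC (- Re z) (- Im z).
Definition Cmul (z w : C) : C :=
  mkC (Re z * Re w - Im z * Im w) (Re z * Im w + Im z * Re w).
Definition Cconj (z : C) : C := mkC (Re z) (- Im z).

Definition Mat (n : nat) := 'I_n -> 'I_n -> C.
Definition Vec (n : nat) := 'I_n -> C.

Definition Csum (n : nat) (F : 'I_n -> C) : C := \big[Cadd/C0]_(i < n) F i.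

Definition madd n (A B : Mat n) : Mat n := fun i j => Cadd (A i j) (B i j).
Definition mopp n (A : Mat n) : Mat n := fun i j => Copp (A i j).
Definition msub n (A B : Mat n) : Mat n := madd A (mopp B).
Definition mscale n (t : R) (A : Mat n) : Mat n := fun i j => Cmul (CofR t) (A i j).
Definition mmul n (A B : Mat n) : Mat n :=
  fun i j => Csum (fun k => Cmul (A i k) (B k j)).
Definition madj n (A : Mat n) : Mat n := fun i j => Cconj (A j i).
Definition mid n : Mat n := fun i j => if i == j then C1 else C0.
Definition mdiag n (d : 'I_n -> R) : Mat n :=
  fun i j => if i == j then CofR (d i) else C0.
Definition mtrace n (A : Mat n) : C := Csum (fun i => A i i).

Definition quad n (A : Mat n) (x : Vec n) : C :=
  Csum (fun i => Csum (fun j => Cmul (Cconj (x i)) (Cmul (A i j) (x j)))).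

Definition psd n (A : Mat n) : Prop :=
  forall x : Vec n, Im (quad A x) = 0 /\ (0 <= Re (quad A x)).

Definition posdef n (A : Mat n) : Prop :=
  psd A /\ forall x : Vec n, (exists i, x i <> C0) -> (0 < Re (quad A x)).

Definition loewner_le n (A B : Mat n) : Prop := psd (msub B A).

Definition unitary n (U : Mat n) : Prop := mmul (madj U) U = @mid n.

Definition pos_spectral n (A : Mat n) (Ud : Mat n * ('I_n -> R)) : Prop :=
  unitary Ud.1 /\ (forall i, (0 < Ud.2 i)) /\
  A = mmul Ud.1 (mmul (mdiag Ud.2) (madj Ud.1)).

Definition spec_choice n (A : Mat n) : Mat n * ('I_n -> R) :=
  epsilon (inhabits (@mid n, fun _ => 1)) (pos_spectral A).

(* real power A^t of a positive definite matrix, via functional calculus: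
   A^t = U diag(d_i^t) U^*  (independent of the chosen decomposition) *)
Definition mpow n (A : Mat n) (t : R) : Mat n :=
  let Ud := spec_choice A in
  mmul Ud.1 (mmul (mdiag (fun i => Rpower (Ud.2 i) t)) (madj Ud.1)).

Definition mconv n (l : R) (A1 A2 : Mat n) : Mat n :=
  madd (mscale l A1) (mscale (1 - l) A2).

Definition jointly_operator_convex n (F : Mat n -> Mat n -> Mat n) : Prop :=
  forall (A1 A2 B1 B2 : Mat n) (l : R), posdef A1 -> posdef A2 ->
    posdef B1 -> posdef B2 -> (0 <= l <= 1) ->
    loewner_le (F (mconv l A1 A2) (mconv l B1 B2)) (mconv l (F A1 B1) (F A2 B2)).

Definition jointly_operator_concave n (F : Mat n -> Mat n -> Mat n) : Prop :=
  forall (A1 A2 B1 B2 : Mat n) (l : R), posdef A1 -> posdef A2 ->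
    posdef B1 -> posdef B2 -> (0 <= l <= 1) ->
    loewner_le (mconv l (F A1 B1) (F A2 B2)) (F (mconv l A1 A2) (mconv l B1 B2)).

Definition jointly_convex3 n (f : Mat n -> Mat n -> Mat n -> R) : Prop :=
  forall (A1 A2 B1 B2 C1 C2 : Mat n) (l : R), posdef A1 -> posdef A2 ->
    posdef B1 -> posdef B2 -> posdef C1 -> posdef C2 -> (0 <= l <= 1) ->
    (f (mconv l A1 A2) (mconv l B1 B2) (mconv l C1 C2)
      <= l * f A1 B1 C1 + (1 - l) * f A2 B2 C2).

Definition jointly_concave3 n (f : Mat n -> Mat n -> Mat n -> R) : Prop :=
  forall (A1 A2 B1 B2 C1 C2 : Mat n) (l : R), posdef A1 -> posdef A2 ->
    posdef B1 -> posdef B2 -> posdef C1 -> posdef C2 -> (0 <= l <= 1) ->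
    (l * f A1 B1 C1 + (1 - l) * f A2 B2 C2
      <= f (mconv l A1 A2) (mconv l B1 B2) (mconv l C1 C2)).

Definition Phi n (p q : R) (A B : Mat n) : Mat n :=
  mmul (mpow A (q / 2)) (mmul (mpow B p) (mpow A (q / 2))).

(* (A,B,C) |-> Tr[A^{q/2} B^p A^{q/2} C^r]  (real part; the trace is real
   for positive definite arguments) *)
Definition trfun n (p q r : R) (A B C' : Mat n) : R :=
  Re (mtrace (mmul (Phi p q A B) (mpow C' r))).

(* Taking C1 = C2 = C in the convexity hypothesis shows that
     D := l Phi(A1,B1) + (1-l) Phi(A2,B2) - Phi(l A1 + (1-l) A2, l B1 + (1-l) B2)
   satisfies Re Tr[D C^r] >= 0 for every positive definite C.  Since r <> 0, the map C |-> C^r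
   sends the positive definite matrices onto themselves, so Re Tr[D M] >= 0 for every positive
   definite M.  Testing against M = v^* v + eps I gives v D v^* + eps Re Tr D >= 0, and letting
   eps -> 0 shows that D is positive semidefinite.  The concave case is the same with D negated. *)

From Pilot Require Import Defs.
From Stdlib Require Import Reals Lra ClassicalEpsilon FunctionalExtensionality.
From mathcomp Require Import all_boot all_algebra.
From mathcomp Require Import Rstruct complex spectral sesquilinear.
From mathcomp Require Import ring lra.
Import mathcomp.order.order.Order.TTheory GRing.Theory Num.Theory.

Set Implicit Arguments.
Unset Strict Implicit.
Unset Printing Implicit Defensive.
Local Open Scope ring_scope.
Local Open Scope sesquilinear_scope.

(* [Mat n] is transported to MathComp matrices over R[i], where the spectral theorem
   [spectralmx] is available. *)
Definition K := (R : rcfType)[i].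

Definition toK (z : Defs.C) : K := (Defs.Re z +i* Defs.Im z)%C.
Definition ofK (z : K) : Defs.C := mkC (complex.Re z) (complex.Im z).

Lemma toKK : cancel toK ofK. Proof. by case. Qed.
Lemma ofKK : cancel ofK toK. Proof. by case. Qed.

Lemma toK_add z w : toK (Cadd z w) = toK z + toK w. Proof. by []. Qed.
Lemma toK_mul z w : toK (Cmul z w) = toK z * toK w. Proof. by []. Qed.

Lemma toK_sum n (F : 'I_n -> Defs.C) : toK (Csum F) = \sum_i toK (F i).
Proof. exact: (big_morph toK toK_add (erefl : toK C0 = 0)). Qed.

Definition tomx n (A : Mat n) : 'M[K]_n := \matrix_(i, j) toK (A i j).
Definition ofmx n (A : 'M[K]_n) : Mat n := fun i j => ofK (A i j).

Lemma tomxK n : cancel (@tomx n) (@ofmx n).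
Proof.
move=> A; apply: functional_extensionality => i.
by apply: functional_extensionality => j; rewrite /ofmx mxE toKK.
Qed.

Lemma ofmxK n : cancel (@ofmx n) (@tomx n).
Proof. by move=> A; apply/matrixP => i j; rewrite mxE ofKK. Qed.

Lemma tomx_inj n : injective (@tomx n). Proof. exact: can_inj (@tomxK n). Qed.

Lemma tomx_mul n (A B : Mat n) : tomx (mmul A B) = tomx A *m tomx B.
Proof.
apply/matrixP => i j; rewrite !mxE toK_sum.
by apply: eq_bigr => k _; rewrite toK_mul !mxE.
Qed.

Lemma tomx_sub n (A B : Mat n) : tomx (msub A B) = tomx A - tomx B.
Proof. by apply/matrixP => i j; rewrite !mxE. Qed.

Lemma tomx_mconv n l (A B : Mat n) :
  tomx (mconv l A B) = (l%:C)%C *: tomx A + ((1 - l)%:C)%C *: tomx B.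
Proof. by apply/matrixP => i j; rewrite !mxE. Qed.

Lemma tomx_adj n (A : Mat n) : tomx (madj A) = (tomx A)^t*.
Proof. by apply/matrixP => i j; rewrite !mxE. Qed.

Lemma tomx_id n : tomx (@mid n) = 1%:M.
Proof. by apply/matrixP => i j; rewrite !mxE /mid; case: (i == j). Qed.

Definition cdiag n (d : 'I_n -> R) : 'M[K]_n := diag_mx (\row_i ((d i)%:C)%C).

Lemma tomx_diag n (d : 'I_n -> R) : tomx (mdiag d) = cdiag d.
Proof.
apply/matrixP => i j; rewrite !mxE /mdiag.
by case: eqP => [->|_]; rewrite ?mulr1n ?mulr0n.
Qed.

Lemma toK_mtrace n (A : Mat n) : toK (mtrace A) = \tr (tomx A).
Proof. by rewrite /mtrace toK_sum; apply: eq_bigr => i _; rewrite mxE. Qed.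

Definition torow n (x : Vec n) : 'rV[K]_n := \row_i ((toK (x i))^*)%C.

Lemma toK_quad n (A : Mat n) x :
  toK (quad A x) = (torow x *m tomx A *m (torow x)^t*) 0 0.
Proof.
rewrite -mulmxA /quad toK_sum !mxE; apply: eq_bigr => i _.
rewrite toK_sum !mxE big_distrr; apply: eq_bigr => j _.
by rewrite !toK_mul !mxE; congr (_ * (_ * _)); exact: esym (conjcK _).
Qed.

Lemma torow_eq0 n (x : Vec n) : torow x = 0 -> forall i, x i = C0.
Proof.
move=> /rowP x0 i; have /eqP := x0 i; rewrite !mxE conjc_eq0 => /eqP.
by move=> /(congr1 ofK); rewrite toKK.
Qed.

Lemma psd_of_form_ge0 n (A : Mat n) :
  (forall v : 'rV[K]_n, 0 <= (v *m tomx A *m v^t*) 0 0) -> psd A.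
Proof.
move=> A_ge0 x; have := A_ge0 (torow x).
by rewrite -toK_quad lecE /= => /andP[/eqP -> /RleP].
Qed.

Lemma posdef_of_form_gt0 n (A : Mat n) :
  (forall v : 'rV[K]_n, v != 0 -> 0 < (v *m tomx A *m v^t*) 0 0) -> posdef A.
Proof.
move=> A_gt0; split.
  apply: psd_of_form_ge0 => v; have [->|/A_gt0/ltW //] := eqVneq v 0.
  by rewrite !mul0mx mxE.
move=> x [i xi_neq0]; have /A_gt0 : torow x != 0.
  by apply/eqP => /torow_eq0/(_ i).
by rewrite -toK_quad ltcE /= => /andP[_ /RltP].
Qed.

Lemma adjmxM m n p (A : 'M[K]_(m, n)) (B : 'M[K]_(n, p)) :
  (A *m B)^t* = B^t* *m A^t*.
Proof. by rewrite trmx_mul map_mxM. Qed.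

Lemma adjmxK m n (A : 'M[K]_(m, n)) : A^t*^t* = A. Proof. exact: trmxCK. Qed.

Lemma diag_form_gt0 n (d : 'rV[K]_n) (w : 'rV[K]_n) :
  (forall i, 0 < d 0 i) -> w != 0 -> 0 < (w *m diag_mx d *m w^t*) 0 0.
Proof.
move=> d_gt0 w_neq0; rewrite mul_mx_diag mxE.
have [i wi_neq0] : exists i, w 0 i != 0.
  apply/existsP; apply: contraNT w_neq0 => /existsPn w0.
  by apply/eqP/rowP => i; rewrite mxE; apply/eqP/negbNE.
under eq_bigr => j _ do rewrite !mxE mulrAC.
rewrite (bigD1 i) //= ltr_wpDr ?sumr_ge0 //; last by rewrite mulr_gt0 ?mul_conjC_gt0.
by move=> j _; rewrite mulr_ge0 ?mul_conjC_ge0 // ltW.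
Qed.

Lemma cdiag_adj n (d : 'I_n -> R) : (cdiag d)^t* = cdiag d.
Proof.
rewrite /cdiag tr_diag_mx map_diag_mx; congr diag_mx.
by apply/rowP => i; rewrite !mxE; exact: conjc_real.
Qed.

Lemma tomx_spectral n (U : Mat n) (d : 'I_n -> R) :
  tomx (mmul U (mmul (mdiag d) (madj U))) = tomx U *m cdiag d *m (tomx U)^t*.
Proof. by rewrite !tomx_mul tomx_diag tomx_adj mulmxA. Qed.

Lemma unitary_adj_tomx n (U : Mat n) : unitary U -> (tomx U)^t* \is unitarymx.
Proof.
move=> U_unitary; apply/unitarymxP.
by rewrite adjmxK -tomx_adj -tomx_mul U_unitary tomx_id.
Qed.

Lemma unitary_ofmx n (P : 'M[K]_n) : P \is unitarymx -> unitary (ofmx (P^t*)).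
Proof.
move=> /unitarymxP P_unitary; apply: tomx_inj.
by rewrite tomx_mul tomx_adj ofmxK adjmxK P_unitary tomx_id.
Qed.

Lemma form_conj n (P : 'M[K]_n) (D : 'M[K]_n) (v : 'rV[K]_n) :
  v *m (P^t* *m D *m P) *m v^t* = (v *m P^t*) *m D *m (v *m P^t*)^t*.
Proof. by rewrite adjmxM adjmxK !mulmxA. Qed.

Lemma posdef_spectral n (A : Mat n) Ud : pos_spectral A Ud -> posdef A.
Proof.
case: Ud => U d [/= /unitary_adj_tomx P_unitary [d_gt0 ->]].
apply: posdef_of_form_gt0 => v v_neq0.
rewrite tomx_spectral -{1}[tomx U]adjmxK form_conj.
apply: diag_form_gt0 => [i|]; first by rewrite mxE ltcR; apply/RltP.
apply: contra v_neq0 => /eqP vP0.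
by rewrite -(mulmxKtV v P_unitary) // vP0 mul0mx.
Qed.

Lemma cdiag_intertwine n (d d' : 'I_n -> R) (f : R -> R) (W : 'M[K]_n) :
  cdiag d' *m W = W *m cdiag d -> cdiag (f \o d') *m W = W *m cdiag (f \o d).
Proof.
move=> /matrixP dW; apply/matrixP => i j; have := dW i j.
rewrite !mul_diag_mx !mul_mx_diag !mxE /= => dW_ij.
have [->|W_ij_neq0] := eqVneq (W i j) 0; first by rewrite mulr0 mul0r.
suff -> : d' i = d j by rewrite mulrC.
by apply/complexI/(mulIf W_ij_neq0); rewrite dW_ij mulrC.
Qed.

Lemma unitary_diag_fun n (P P' : 'M[K]_n) (d d' : 'I_n -> R) (f : R -> R) :
  P \is unitarymx -> P' \is unitarymx ->
  P^t* *m cdiag d *m P = P'^t* *m cdiag d' *m P' ->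
  P^t* *m cdiag (f \o d) *m P = P'^t* *m cdiag (f \o d') *m P'.
Proof.
move=> /unitarymxP PPt /unitarymxP P'P't eqD; have PtP := mulmx1C PPt.
set W := P' *m P^t*.
have W_intertwines : cdiag d' *m W = W *m cdiag d.
  have := congr1 (fun X => P' *m X *m P^t*) eqD.
  rewrite /W !mulmxA -[_ *m P *m P^t*]mulmxA PPt mulmx1 P'P't mul1mx.
  by move=> ->.
have := congr1 (fun X => P'^t* *m X *m P) (cdiag_intertwine f W_intertwines).
rewrite /W !mulmxA (mulmx1C P'P't) mul1mx -[_ *m P^t* *m P]mulmxA PtP mulmx1.
by move=> ->.
Qed.

Lemma tomx_pos_spectral n (A : Mat n) U d :
  pos_spectral A (U, d) -> tomx A = ((tomx U)^t*)^t* *m cdiag d *m (tomx U)^t*.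
Proof. by case=> _ [_ ->]; rewrite tomx_spectral adjmxK. Qed.

Lemma spectral_fun_uniq n (A : Mat n) U d U' d' (f : R -> R) :
  pos_spectral A (U, d) -> pos_spectral A (U', d') ->
  mmul U (mmul (mdiag (f \o d)) (madj U)) = mmul U' (mmul (mdiag (f \o d')) (madj U')).
Proof.
move=> sA sA'.
have eqA := etrans (esym (tomx_pos_spectral sA)) (tomx_pos_spectral sA').
case: sA sA' => /unitary_adj_tomx P_unitary _ [/unitary_adj_tomx P'_unitary _].
apply: tomx_inj; rewrite !tomx_spectral -{1}[tomx U]adjmxK -{1}[tomx U']adjmxK.
exact: (unitary_diag_fun f P_unitary P'_unitary eqA).
Qed.

Lemma mpow_spectral n (A : Mat n) U d t : pos_spectral A (U, d) ->
  mpow A t = mmul U (mmul (mdiag (fun i => Rpower (d i) t)) (madj U)).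
Proof.
move=> sA; have := epsilon_spec (inhabits (@mid n, fun _ => 1%R)) _ (ex_intro _ _ sA).
rewrite /mpow -/(spec_choice A); case: (spec_choice A) => U' d' sA'.
exact: (spectral_fun_uniq (fun x => Rpower x t) sA' sA).
Qed.

Lemma madj_mmul n (A B : Mat n) : madj (mmul A B) = mmul (madj B) (madj A).
Proof. by apply: tomx_inj; rewrite !(tomx_adj, tomx_mul) adjmxM. Qed.

Lemma madj_msub n (A B : Mat n) : madj (msub A B) = msub (madj A) (madj B).
Proof. by apply: tomx_inj; rewrite !(tomx_adj, tomx_sub) linearB /= map_mxB. Qed.

Lemma madj_mconv n l (A B : Mat n) : madj (mconv l A B) = mconv l (madj A) (madj B).
Proof.
apply: tomx_inj; rewrite !(tomx_adj, tomx_mconv) linearD /= map_mxD.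
by rewrite !linearZ /= !map_mxZ; congr (_ *: _ + _ *: _); exact: conjc_real.
Qed.

Lemma madj_mpow n (A : Mat n) t : madj (mpow A t) = mpow A t.
Proof.
apply: tomx_inj.
by rewrite tomx_adj /mpow tomx_spectral !adjmxM adjmxK cdiag_adj mulmxA.
Qed.

Lemma mmulA n (A B C : Mat n) : mmul A (mmul B C) = mmul (mmul A B) C.
Proof. by apply: tomx_inj; rewrite !tomx_mul mulmxA. Qed.

Lemma madj_Phi n p q (A B : Mat n) : madj (Phi p q A B) = Phi p q A B.
Proof. by rewrite /Phi !(madj_mmul, madj_mpow) mmulA. Qed.

Lemma row_form_diag m n (P : 'M[K]_(m, n)) (M : 'M[K]_n) (i : 'I_m) :
  (row i P *m M *m (row i P)^t*) 0 0 = (P *m M *m P^t*) i i.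
Proof. by rewrite !mxE -row_mul; apply: eq_bigr => k _; rewrite !mxE. Qed.

Lemma unitary_row_neq0 m n (P : 'M[K]_(m, n)) (i : 'I_m) :
  P \is unitarymx -> row i P != 0.
Proof.
move=> /row_unitarymxP/(_ i i); rewrite eqxx => row_dot1.
have : 0 < dotmx (row i P) (row i P) by rewrite row_dot1 ltr01.
by rewrite dnorm_gt0.
Qed.

Lemma mpow_onto n (M : 'M[K]_n) (r : R) : r <> 0 -> M^t* = M ->
  (forall v : 'rV_n, v != 0 -> 0 < (v *m M *m v^t*) 0 0) ->
  exists C : Mat n, posdef C /\ tomx (mpow C r) = M.
Proof.
move=> r_neq0 M_herm M_pos.
have M_normal : M \is normalmx by apply/normalmxP; rewrite M_herm.
set P := spectralmx M; set sp := spectral_diag M.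
have P_unitary : P \is unitarymx := spectral_unitarymx M.
have defM : M = P^t* *m diag_mx sp *m P.
  by rewrite -invmx_unitary //; exact: (elimT (@orthomx_spectralP _ _ M) M_normal).
have sp_gt0 i : 0 < sp 0 i.
  have := M_pos _ (unitary_row_neq0 i P_unitary); rewrite row_form_diag.
  by rewrite {1}defM !mulmxA mulmxtVK // (unitarymxP P_unitary) mul1mx mxE eqxx.
pose d i := complex.Re (sp 0 i).
have sp_real i : sp 0 i = ((d i)%:C)%C.
  by have := sp_gt0 i; rewrite /d; case: (sp 0 i) => a b; rewrite ltcE /= => /andP[/eqP -> _].
have d_gt0 i : Rlt 0 (d i) by apply/RltP; rewrite -ltcR -sp_real.
pose c i := Rpower (d i) (/ r).
have C_spectral : pos_spectral (mmul (ofmx (P^t*)) (mmul (mdiag c) (madj (ofmx (P^t*)))))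
    (ofmx (P^t*), c).
  by split; [exact: unitary_ofmx | split=> // i; exact: exp_pos].
exists (mmul (ofmx (P^t*)) (mmul (mdiag c) (madj (ofmx (P^t*))))); split.
  exact: posdef_spectral C_spectral.
rewrite (mpow_spectral _ C_spectral) tomx_spectral ofmxK adjmxK [in RHS]defM.
suff -> : cdiag (fun i => Rpower (c i) r) = diag_mx sp by [].
rewrite /cdiag; congr diag_mx; apply/rowP => i; rewrite mxE sp_real.
by rewrite /c Rpower_mult Rinv_l // Rpower_1.
Qed.

Lemma rank_one_shift_form_gt0 n (v u : 'rV[K]_n) (eps : R) : 0 < eps -> u != 0 ->
  0 < (u *m (v^t* *m v + ((eps%:C)%C)%:M) *m u^t*) 0 0.
Proof.
move=> eps_gt0 u_neq0.
have rank_one : u *m (v^t* *m v) *m u^t* = (u *m v^t*) *m (u *m v^t*)^t*.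
  by rewrite adjmxM adjmxK !mulmxA.
rewrite mulmxDr mulmxDl rank_one mul_mx_scalar -scalemxAl [X in 0 < X]mxE [X in _ + X]mxE.
by rewrite -!dotmxE ltr_wpDl ?dnorm_ge0 // mulr_gt0 ?dnorm_gt0 // ltcR.
Qed.

Lemma mxtrace_rank_one_shift n (X : 'M[K]_n) (v : 'rV[K]_n) (e : K) :
  \tr (X *m (v^t* *m v + e%:M)) = (v *m X *m v^t*) 0 0 + e * \tr X.
Proof.
rewrite mulmxDr mxtraceD mul_mx_scalar mxtraceZ mulmxA mxtrace_mulC mulmxA.
by rewrite trace_mx11 mulrC.
Qed.

Lemma ge0_of_add_scale_ge0 (F : realFieldType) (a t : F) :
  (forall e, 0 < e -> 0 <= a + e * t) -> 0 <= a.
Proof.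
move=> H; have [t_le0|t_gt0] := lerP t 0.
  by have := H 1 ltr01; rewrite mul1r; lra.
rewrite leNgt; apply/negP => a_lt0.
have := H (- a / (2 * t)); rewrite divr_gt0 ?mulr_gt0 ?oppr_gt0 // => /(_ isT).
have -> : - a / (2 * t) * t = - a / 2 by field; rewrite gt_eqF.
lra.
Qed.

Lemma Im_eq0_of_conj (z : K) : z^* = z -> complex.Im z = 0.
Proof. by case: z => a b [] /=; lra. Qed.

Lemma Im_hermitian_form n (X : 'M[K]_n) (v : 'rV[K]_n) :
  X^t* = X -> complex.Im ((v *m X *m v^t*) 0 0) = 0.
Proof.
move=> X_herm; apply: Im_eq0_of_conj.
have /matrixP/(_ 0 0) : (v *m X *m v^t*)^t* = v *m X *m v^t*.
  by rewrite !adjmxM adjmxK X_herm mulmxA.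
by rewrite mxE [X in _ X = _]mxE.
Qed.

Lemma Re_add (a b : K) : complex.Re (a + b) = complex.Re a + complex.Re b.
Proof. by case: a; case: b. Qed.

Lemma Re_opp (a : K) : complex.Re (- a) = - complex.Re a.
Proof. by case: a. Qed.

Lemma Re_realM (x : R) (a : K) : complex.Re ((x%:C)%C * a) = x * complex.Re a.
Proof. by case: a => a1 a2 /=; rewrite mul0r subr0. Qed.

Lemma rank_one_shift_adj n (v : 'rV[K]_n) (e : R) :
  (v^t* *m v + ((e%:C)%C)%:M)^t* = v^t* *m v + ((e%:C)%C)%:M.
Proof.
rewrite linearD /= map_mxD adjmxM adjmxK tr_scalar_mx map_scalar_mx.
by congr (_ + _%:M); exact: conjc_real.
Qed.

Lemma form_ge0_of_re_trace_ge0 n (X : 'M[K]_n) : X^t* = X ->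
  (forall M : 'M[K]_n, M^t* = M ->
     (forall u : 'rV_n, u != 0 -> 0 < (u *m M *m u^t*) 0 0) ->
     0 <= complex.Re (\tr (X *m M))) ->
  forall v : 'rV[K]_n, 0 <= (v *m X *m v^t*) 0 0.
Proof.
move=> X_herm X_tr v; rewrite lecE Im_hermitian_form //= eqxx.
apply: (@ge0_of_add_scale_ge0 _ _ (complex.Re (\tr X))) => e e_gt0.
have := X_tr _ (rank_one_shift_adj v e) (fun u => rank_one_shift_form_gt0 v e_gt0).
by rewrite mxtrace_rank_one_shift Re_add Re_realM.
Qed.

Local Close Scope sesquilinear_scope.
Local Close Scope ring_scope.
Local Open Scope R_scope.

Lemma Re_toK z : complex.Re (toK z) = Defs.Re z. Proof. by []. Qed.

Lemma psd_of_re_mtrace_mpow_ge0 n (X : Mat n) r : r <> 0 -> madj X = X ->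
  (forall C, posdef C -> 0 <= Defs.Re (mtrace (mmul X (mpow C r)))) -> psd X.
Proof.
move=> r_neq0 X_sa X_tr; apply: psd_of_form_ge0; apply: form_ge0_of_re_trace_ge0.
  by rewrite -tomx_adj X_sa.
move=> M M_herm M_pos; have [C [C_pd <-]] := mpow_onto r_neq0 M_herm M_pos.
by apply/RleP; rewrite -tomx_mul -toK_mtrace Re_toK; exact: X_tr.
Qed.

Lemma re_mtrace_msub n (X Y Z : Mat n) :
  Defs.Re (mtrace (mmul (msub X Y) Z)) = Defs.Re (mtrace (mmul X Z)) - Defs.Re (mtrace (mmul Y Z)).
Proof.
rewrite -!Re_toK !toK_mtrace !tomx_mul tomx_sub mulmxBl linearB /=.
by rewrite Re_add Re_opp.
Qed.

Lemma re_mtrace_mconv n l (X Y Z : Mat n) :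
  Defs.Re (mtrace (mmul (mconv l X Y) Z)) =
  l * Defs.Re (mtrace (mmul X Z)) + (1 - l) * Defs.Re (mtrace (mmul Y Z)).
Proof.
rewrite -!Re_toK !toK_mtrace !tomx_mul tomx_mconv mulmxDl -!scalemxAl.
by rewrite mxtraceD !mxtraceZ Re_add !Re_realM.
Qed.

Lemma mconv_id n l (A : Mat n) : mconv l A A = A.
Proof.
apply: tomx_inj; rewrite tomx_mconv -scalerDl -raddfD /=.
by rewrite addrC subrK rmorph1 scale1r.
Qed.

Theorem lemma3p1 (n : nat) (p q r : R) :
  (1 <= n)%N -> p <> 0 -> q <> 0 -> r <> 0 ->
  (jointly_convex3 (trfun (n:=n) p q r) ->
     jointly_operator_convex (Phi (n:=n) p q)) /\
  (jointly_concave3 (trfun (n:=n) p q r) ->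
     jointly_operator_concave (Phi (n:=n) p q)).
Proof.
move=> _ _ _ r_neq0.
split=> H A1 A2 B1 B2 l A1_pd A2_pd B1_pd B2_pd l01;
  apply: (psd_of_re_mtrace_mpow_ge0 r_neq0);
  rewrite ?madj_msub ?madj_mconv ?madj_Phi // => C C_pd;
  have := H A1 A2 B1 B2 C C l A1_pd A2_pd B1_pd B2_pd C_pd C_pd l01;
  rewrite mconv_id /trfun re_mtrace_msub re_mtrace_mconv; Lra.lra.
Qed.
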